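(* For every claw-free graph $G$, $\chi(G^2)\le 2\omega(G)^2-2\omega(G)+1$.
   Context: Claw-free means no induced $K_{1,3}$. $G^2$ is the graph on $V(G)$ where distinct vertices are adjacent iff at distance at most $2$ in $G$. $\chi$ is chromatic number, $\omega$ clique number. *)

(* A finite simple graph on a finType T is a symmetric,
   irreflexive relation e : rel T. *)
From mathcomp Require Import all_boot.
Set Implicit Arguments. Unset Strict Implicit. Unset Printing Implicit Defensive.

Section Graphs.
Variable T : finType.

Definition claw_free (e : rel T) : Prop :=
  forall c a b d : T, e c a -> e c b -> e c d ->
    a != b -> a != d -> b != d ->
    ~~ e a b -> ~~ e a d -> ~~ e b d -> False.

Definition square (e : rel T) : rel T :=
  fun x y => (x != y) && (e x y || [exists z, e x z && e z y]).

Definition clique (e : rel T) (K : {set T}) : bool :=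
  [forall x in K, forall y in K, (x != y) ==> e x y].

Definition omega (e : rel T) : nat := \max_(K : {set T} | clique e K) #|K|.

Definition colorable (e : rel T) (k : nat) : bool :=
  [exists f : {ffun T -> 'I_k},
     [forall x, forall y, ((x != y) && e x y) ==> (f x != f y)]].

Lemma colorable_card (e : rel T) : exists k, colorable e k.
Proof.
exists #|T|; apply/existsP; exists [ffun x => enum_rank x].
apply/forallP=> x; apply/forallP=> y; apply/implyP=> /andP [nxy _].
rewrite !ffunE; apply: contra nxy => /eqP /enum_rank_inj ->; exact: eqxx.
Qed.

Definition chi (e : rel T) : nat := ex_minn (colorable_card e).
End Graphs.

From mathcomp Require Import all_boot zify.
Set Implicit Arguments. Unset Strict Implicit. Unset Printing Implicit Defensive.

(* Greedy colouring bounds chi(G^2) by one plus the maximum degree of G^2, so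
   with k = omega(G) - 1 it suffices that every vertex v has at most 2k(k+1)
   vertices at distance 1 or 2. In a claw-free graph, for every edge cp the
   neighbours of c other than p and non-adjacent to p form a clique. Hence
   N(v) has no stable triple and no clique of size k+1, so Ramsey's bound gives
   |N(v)| <= k(k+3)/2; every u in N(v) has at most k neighbours at distance 2
   from v, while every vertex at distance 2 has at least
   max(1, |N(v)| + 1 - 2k) neighbours in N(v). Double counting the edges
   between the two layers yields the bound. *)

Section Greedy.
Variables (T : finType) (r : rel T) (D : nat).
Hypothesis r_sym : symmetric r.
Hypothesis r_maxdeg : forall x, #|[set y | r x y]| <= D.

Lemma greedy_coloring_on (S : {set T}) : exists f : {ffun T -> 'I_D.+1},
  {in S &, forall x y, x != y -> r x y -> f x != f y}.
Proof.
have [n] := ubnP #|S|; elim: n S => // n IH S ltSn.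
have [->|[x xS]] := set_0Vmem S; first by exists [ffun=> ord0] => y z; rewrite inE.
have /IH [f f_proper] : #|S :\ x| < n by rewrite (cardsD1 x S) xS in ltSn.
have /subsetPn [c _ c_free] : ~~ ([set: 'I_D.+1] \subset f @: [set y | r x y]).
  apply: contraL (leq_imset_card f [set y | r x y]) => /subset_leq_card.
  by rewrite cardsT card_ord -ltnNge; exact: leq_ltn_trans (r_maxdeg x).
exists [ffun y => if y == x then c else f y] => y z yS zS neq_yz r_yz.
rewrite !ffunE.
have [eq_yx|neq_yx] := eqVneq y x; have [eq_zx|neq_zx] := eqVneq z x.
- by rewrite eq_yx eq_zx eqxx in neq_yz.
- by apply: contraNneq c_free => ->; apply/imsetP; exists z; rewrite // inE -eq_yx.
- apply: contraNneq c_free => <-; apply/imsetP.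
  by exists y; rewrite // inE r_sym -eq_zx.
- by apply: f_proper; rewrite // !in_setD1 ?neq_yx ?neq_zx.
Qed.

Lemma colorable_maxdeg : colorable r D.+1.
Proof.
have [f f_proper] := greedy_coloring_on [set: T].
apply/existsP; exists f; apply/forallP => x; apply/forallP => y.
by apply/implyP => /andP [neq_xy r_xy]; apply: f_proper; rewrite ?inE.
Qed.

End Greedy.

Lemma chi_le (T : finType) (r : rel T) (n : nat) : colorable r n -> chi r <= n.
Proof. by rewrite /chi; case: ex_minnP => m _; apply. Qed.

Lemma square_sym (T : finType) (e : rel T) : symmetric e -> symmetric (square e).
Proof.
move=> e_sym x y; rewrite /square eq_sym e_sym; congr (_ && (_ || _)).
by apply/existsP/existsP => -[z /andP [xz zy]]; exists z; rewrite e_sym zy e_sym xz.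
Qed.

Section Cliques.
Variables (T : finType) (e : rel T).
Hypotheses (e_sym : symmetric e) (e_irr : irreflexive e).

Lemma cliqueP (K : {set T}) :
  reflect {in K &, forall x y, x != y -> e x y} (clique e K).
Proof.
apply: (iffP forall_inP) => [cK x y xK yK | cK x xK].
  by move/forall_inP/(_ y yK)/implyP: (cK x xK).
by apply/forall_inP => y yK; apply/implyP; apply: cK.
Qed.

Lemma clique1 x : clique e [set x].
Proof. by apply/cliqueP => y z /set1P -> /set1P ->; rewrite eqxx. Qed.

Lemma clique_subset (K L : {set T}) : K \subset L -> clique e L -> clique e K.
Proof.
move=> /subsetP sKL /cliqueP cL; apply/cliqueP => x y xK yK; apply: cL; exact: sKL.
Qed.

Lemma clique_setU1 p (K : {set T}) :
  clique e K -> {in K, forall x, e p x} -> clique e (p |: K).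
Proof.
move=> /cliqueP cK pK; apply/cliqueP => x y /setU1P [->|xK] /setU1P [->|yK].
- by rewrite eqxx.
- by move=> _; apply: pK.
- by move=> _; rewrite e_sym pK.
- exact: cK.
Qed.

Lemma card_setU1_nbhd p (K : {set T}) :
  {in K, forall x, e p x} -> #|p |: K| = #|K|.+1.
Proof.
by move=> pK; rewrite cardsU1; case: (boolP (p \in K)) => // /pK; rewrite e_irr.
Qed.

Lemma clique_le_omega (K : {set T}) : clique e K -> #|K| <= omega e.
Proof. by move=> cK; rewrite /omega (bigmax_sup K). Qed.

Definition stable_le2 (S : {set T}) : Prop :=
  forall a b c, a \in S -> b \in S -> c \in S -> a != b -> a != c -> b != c ->
    [|| e a b, e a c | e b c].

(* The Ramsey bound R(3, k + 1) <= 'C(k + 2, 2). *)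
Lemma ramsey3 (k : nat) (S : {set T}) : stable_le2 S ->
  (forall K : {set T}, K \subset S -> clique e K -> #|K| <= k) ->
  2 * #|S| <= k * (k + 3).
Proof.
elim: k S => [|k IH] S stS cl_bound; have [->|[a aS]] := set_0Vmem S;
  rewrite ?cards0 //.
  by have := cl_bound _ _ (clique1 a); rewrite sub1set aS cards1 => /(_ isT).
set P := [set y in S | e a y]; set Q := [set y in S | (y != a) && ~~ e a y].
have sub_S : S \subset a |: (P :|: Q).
  by apply/subsetP => y yS; rewrite !inE yS; case: eqP; case: (e a y).
have cardP : 2 * #|P| <= k * (k + 3).
  apply: IH => [x y z | K sKP cK].
    by rewrite !inE => /andP [xS _] /andP [yS _] /andP [zS _]; apply: stS.
  have aK : {in K, forall x, e a x}.
    by move=> x /(subsetP sKP); rewrite inE => /andP [].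
  rewrite -ltnS -(card_setU1_nbhd aK); apply: cl_bound; last exact: clique_setU1.
  by rewrite subUset sub1set aS (subset_trans sKP) // /P setIdE subsetIl.
have cardQ : #|Q| <= k.+1.
  apply: cl_bound; first by rewrite /Q setIdE subsetIl.
  apply/cliqueP => x y; rewrite !inE => /and3P [xS xa ax] /and3P [yS ya ay] xy.
  have := stS a x y aS xS yS.
  by rewrite ![a == _]eq_sym xa ya (negbTE ax) (negbTE ay); apply.
have := subset_leq_card sub_S; have := cardsU1 a (P :|: Q); have := cardsU P Q.
have := leq_b1 (a \notin P :|: Q); lia.
Qed.

End Cliques.

Lemma double_count (T U : finType) (r : T -> U -> bool) (A : {set T}) (B : {set U}) :
  \sum_(x in A) #|[set y in B | r x y]| = \sum_(y in B) #|[set x in A | r x y]|.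
Proof.
have cardE (V : finType) (C : {set V}) (P : pred V) :
    #|[set y in C | P y]| = \sum_(y in C) P y.
  by rewrite -sum1dep_card big_mkcondr /=; apply: eq_bigr => y _; case: (P y).
under eq_bigr do rewrite cardE; under [RHS]eq_bigr do rewrite cardE.
exact: exchange_big.
Qed.

Lemma nbhd_count_arith n b k : 2 * n <= k * (k + 3) -> b <= n * k ->
  b * (n + 1 - 2 * k) <= n * k -> n + b <= 2 * k.+1 * k.
Proof.
move=> le_n le_b; have [le_n2k|lt2k_n] := leqP n (2 * k); first by nia.
have [t def_n] : exists t, n = (2 * k).+1 + t by exists (n - (2 * k).+1); lia.
have -> : n + 1 - 2 * k = t + 2 by lia.
by move=> le_bn; subst n; nia.
Qed.

Section ClawFree.
Variables (T : finType) (e : rel T) (k : nat).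
Hypotheses (e_sym : symmetric e) (e_irr : irreflexive e) (e_claw_free : claw_free e).
Hypothesis omega_le : forall K : {set T}, clique e K -> #|K| <= k.+1.

Lemma claw_free_nbhd c a b d : e c a -> e c b -> e c d ->
  a != b -> a != d -> b != d -> [|| e a b, e a d | e b d].
Proof.
move=> ca cb cd ab ad bd; apply: contraT => /norP [nab /norP [nad nbd]].
by case: (e_claw_free ca cb cd ab ad bd nab nad nbd).
Qed.

Lemma nonadj_nbhd_clique c p : e c p ->
  clique e [set x | [&& e c x, x != p & ~~ e p x]].
Proof.
move=> cp; apply/cliqueP => x y; rewrite !inE.
move=> /and3P [cx xp px] /and3P [cy yp py] xy; have := claw_free_nbhd cp cx cy.
by rewrite ![p == _]eq_sym xp yp (negbTE px) (negbTE py); apply.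
Qed.

Lemma card_clique_nbhd p (K : {set T}) :
  clique e K -> {in K, forall x, e p x} -> #|K| <= k.
Proof.
by move=> cK pK; rewrite -ltnS -(card_setU1_nbhd e_irr pK) omega_le ?clique_setU1.
Qed.

Definition second_nbhd v : {set T} :=
  [set y | [&& y != v, ~~ e v y & [exists z, e v z && e z y]]].

Section Vertex.
Variable v : T.
Let A := [set y | e v y].
Let B := second_nbhd v.

Lemma card_nbhd : 2 * #|A| <= k * (k + 3).
Proof.
apply: (ramsey3 e_sym e_irr) => [a b c | K sKA cK].
  by rewrite !inE; apply: claw_free_nbhd.
by apply: (card_clique_nbhd (p := v)) => // x /(subsetP sKA); rewrite inE.
Qed.

Lemma card_second_nbhd_adj u : u \in A -> #|[set y in B | e u y]| <= k.
Proof.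
rewrite inE => vu; apply: (card_clique_nbhd (p := u)); last first.
  by move=> y; rewrite inE => /andP [].
apply: clique_subset (nonadj_nbhd_clique (_ : e u v)); last by rewrite e_sym.
by apply/subsetP => y; rewrite !inE => /andP [/and3P [-> -> _] ->].
Qed.

Lemma card_nbhd_adj_gt0 y : y \in B -> 0 < #|[set u in A | e u y]|.
Proof.
rewrite inE => /and3P [_ _ /existsP [u /andP [vu uy]]].
by apply/card_gt0P; exists u; rewrite !inE vu.
Qed.

Lemma card_nbhd_adj y : y \in B -> #|A| + 1 <= #|[set u in A | e u y]| + 2 * k.
Proof.
rewrite inE => /and3P [yv vy /existsP [u /andP [vu uy]]].
set D := [set u in A | e u y].
set Q1 := [set a in A | e u a && ~~ e a y].
set Q2 := [set a in A | (a != u) && ~~ e u a].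
have sub_A : A \subset D :|: (Q1 :|: Q2).
  apply/subsetP => a; rewrite !inE => va; rewrite va /=.
  by have [->|] := eqVneq a u; rewrite ?uy //; case: (e a y); case: (e u a).
have cardQ2 : #|Q2| <= k.
  apply: (card_clique_nbhd (p := v)); last by move=> a; rewrite !inE => /andP [].
  apply: clique_subset (nonadj_nbhd_clique vu).
  by apply/subsetP => a; rewrite !inE => /and3P [-> -> ->].
have cardQ1 : #|u |: Q1| <= k.
  have uQ1 : {in Q1, forall a, e u a} by move=> a; rewrite inE => /and3P [].
  apply: (card_clique_nbhd (p := v)); last first.
    by move=> a /setU1P [->|]; rewrite ?inE // => /andP [].
  apply: clique_setU1 => //; apply: clique_subset (nonadj_nbhd_clique uy).
  apply/subsetP => a; rewrite !inE => /and3P [va -> ya]; rewrite e_sym ya andbT.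
  by apply: contraNneq vy => <-.
have uQ1 : u \notin Q1 by rewrite inE e_irr andbF.
move: cardQ1; rewrite cardsU1 uQ1 => cardQ1.
have := subset_leq_card sub_A; have := cardsU D (Q1 :|: Q2); have := cardsU Q1 Q2.
lia.
Qed.

Lemma card_nbhd_second_nbhd : #|A| + #|B| <= 2 * k.+1 * k.
Proof.
set E := \sum_(u in A) #|[set y in B | e u y]|.
have E_ub : E <= #|A| * k.
  by rewrite -sum_nat_const; apply: leq_sum => u; apply: card_second_nbhd_adj.
have E_lb m : (forall y, y \in B -> m <= #|[set u in A | e u y]|) -> #|B| * m <= E.
  by move=> lb; rewrite /E double_count -sum_nat_const; apply: leq_sum.
apply: nbhd_count_arith card_nbhd _ _.
  by rewrite -[#|B|]muln1 (leq_trans _ E_ub) // E_lb // => y /card_nbhd_adj_gt0.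
apply: leq_trans E_ub; apply: E_lb => y /card_nbhd_adj; lia.
Qed.

Lemma card_square_nbhd : #|[set y | square e v y]| <= 2 * k.+1 * k.
Proof.
apply: leq_trans card_nbhd_second_nbhd; apply: leq_trans (leq_card_setU A B).
apply/subset_leq_card/subsetP => y; rewrite !inE /square => /andP [yv].
by case/orP => [->|->] //; rewrite eq_sym yv orbC; case: (e v y).
Qed.

End Vertex.
End ClawFree.

Theorem mainTheorem7 (T : finType) (e : rel T)
  (e_sym : symmetric e) (e_irr : irreflexive e) (G_claw_free : claw_free e) :
  chi (square e) <= 2 * omega e ^ 2 - 2 * omega e + 1.
Proof.
set k := (omega e).-1.
have omega_le K : clique e K -> #|K| <= k.+1.
  by move=> /clique_le_omega /leq_trans; apply; apply: leqSpred.
have maxdeg := card_square_nbhd e_sym e_irr G_claw_free omega_le.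
apply: leq_trans (chi_le (colorable_maxdeg (square_sym e_sym) maxdeg)) _.
by rewrite /k; case: (omega e) => [|w] /=; nia.
Qed.
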